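(* Let $\bar\beta=\mathcal{N}$. If $(B,\beta_1,\ldots,\beta_B)$ is a feasible solution of problem (RO-$\Sigma$), then $T^\sigma(\beta_1,\ldots,\beta_B,\bar\beta)\neq T^*(\beta_1,\ldots,\beta_B,\bar\beta)$ for every $\sigma\in\Sigma$.
   Context: A ballot style consists of contests $\mathcal{C}=\{1,\ldots,C\}$, candidates $\mathcal{N}=\{1,\ldots,N\}$ partitioned into nonempty sets $\mathcal{N}_c$ ($c\in\mathcal{C}$), and positive integers $v_c$. A filled-out ballot is a subset $\beta\subseteq\mathcal{N}$; $\mathscr{B}=\{\beta\subseteq\mathcal{N}: |\mathcal{N}_c\cap\beta|\le v_c\ \forall c\}$. For any deck of subsets and $i\in\mathcal{N}_c$: $T^*_i(\beta_1,\ldots,\beta_B)=\sum_{b=1}^B\mathbb{I}\{i\in\beta_b\text{ and }|\mathcal{N}_c\cap\beta_b|\le v_c\}$, and for a bijection $\sigma$ of $\mathcal{N}$, $T^\sigma_i(\beta_1,\ldots,\beta_B)=\sum_{b=1}^B\mathbb{I}\{\sigma(i)\in\beta_b\text{ and }|\{\sigma(j)\in\beta_b: j\in\mathcal{N}_c\}|\le v_c\}$. $\Sigma$ is the set of non-identity bijections $\mathcal{N}\to\mathcal{N}$. Problem (RO-$\Sigma$): minimize $B$ over $B\in\mathbb{N}$ and $\beta_1,\ldots,\beta_B\in\mathscr{B}$ subject to $T^\sigma(\beta_1,\ldots,\beta_B)\neq T^*(\beta_1,\ldots,\beta_B)$ for all $\sigma\in\Sigma$. *)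

From mathcomp Require Import all_boot all_order all_fingroup.
Set Implicit Arguments. Unset Strict Implicit. Unset Printing Implicit Defensive.

(* Candidates are 'I_N, contests are 'I_C; [con i] is the contest of candidate i,
   so N_c = [set i | con i == c]. Ballots are subsets {set 'I_N}; a deck is a
   sequence of ballots (B = size of the deck). *)

Section Ballots.
Variables (N C : nat) (con : 'I_N -> 'I_C) (v : 'I_C -> nat).

Definition contest (c : 'I_C) : {set 'I_N} := [set j | con j == c].

Definition valid_ballot (beta : {set 'I_N}) : bool :=
  [forall c, #|contest c :&: beta| <= v c].

Definition Tstar (deck : seq {set 'I_N}) : {ffun 'I_N -> nat} :=
  [ffun i => count (fun beta : {set 'I_N} =>
      (i \in beta) && (#|contest (con i) :&: beta| <= v (con i))) deck].

Definition Tsig (sigma : {perm 'I_N}) (deck : seq {set 'I_N}) : {ffun 'I_N -> nat} :=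
  [ffun i => count (fun beta : {set 'I_N} =>
      (sigma i \in beta) &&
      (#|[set sigma j | j in contest (con i)] :&: beta| <= v (con i))) deck].

Definition RO_feasible (deck : seq {set 'I_N}) : Prop :=
  all valid_ballot deck /\
  forall sigma : {perm 'I_N}, sigma != 1%g -> Tsig sigma deck <> Tstar deck.

End Ballots.

From mathcomp Require Import all_boot all_order all_fingroup.
Set Implicit Arguments. Unset Strict Implicit. Unset Printing Implicit Defensive.

(* Both tallies T^sigma and T^* are counts over the deck, so
   appending a ballot adds, for each candidate i, that ballot's own
   contribution to each tally.  For the full ballot [set: 'I_N] the two
   contributions coincide: sigma i always lies in it, and the relabelled
   contest [set sigma j | j in N_c] meets it in exactly #|N_c| candidates
   because sigma is injective.  Hence T^sigma = T^* on the extended deck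
   forces T^sigma = T^* on the original deck, which feasibility forbids for
   every non-identity sigma. *)

Section FullBallot.
Variables (N C : nat) (con : 'I_N -> 'I_C) (v : 'I_C -> nat).

Definition star_vote (b : {set 'I_N}) (i : 'I_N) : nat :=
  (i \in b) && (#|contest con (con i) :&: b| <= v (con i)).

Definition sig_vote (sigma : {perm 'I_N}) (b : {set 'I_N}) (i : 'I_N) : nat :=
  (sigma i \in b) && (#|[set sigma j | j in contest con (con i)] :&: b| <= v (con i)).

Lemma Tstar_rcons (deck : seq {set 'I_N}) (b : {set 'I_N}) (i : 'I_N) :
  Tstar con v (rcons deck b) i = Tstar con v deck i + star_vote b i.
Proof. by rewrite !ffunE -cats1 count_cat /= addn0. Qed.

Lemma Tsig_rcons (sigma : {perm 'I_N}) (deck : seq {set 'I_N}) (b : {set 'I_N})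
    (i : 'I_N) :
  Tsig con v sigma (rcons deck b) i = Tsig con v sigma deck i + sig_vote sigma b i.
Proof. by rewrite !ffunE -cats1 count_cat /= addn0. Qed.

(* The full ballot contributes the same amount to T^sigma and to T^*:
   relabelling a contest by the bijection sigma preserves its size. *)
Lemma full_ballot_vote (sigma : {perm 'I_N}) (i : 'I_N) :
  sig_vote sigma [set: 'I_N] i = star_vote [set: 'I_N] i.
Proof.
by rewrite /sig_vote /star_vote !in_setT !setIT card_imset //; apply: perm_inj.
Qed.

Lemma tallies_agree_without_full_ballot (sigma : {perm 'I_N})
    (deck : seq {set 'I_N}) :
  Tsig con v sigma (rcons deck [set: 'I_N]) = Tstar con v (rcons deck [set: 'I_N]) ->
  Tsig con v sigma deck = Tstar con v deck.
Proof.
move=> agree_ext; apply/ffunP=> i.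
have := congr1 (fun T : {ffun 'I_N -> nat} => T i) agree_ext.
by rewrite /= Tsig_rcons Tstar_rcons full_ballot_vote => /addIn.
Qed.

End FullBallot.

Theorem proposition7 (N C : nat) (con : 'I_N -> 'I_C) (v : 'I_C -> nat)
  (con_surj : forall c : 'I_C, exists i : 'I_N, con i = c)
  (v_pos : forall c : 'I_C, 0 < v c)
  (deck : seq {set 'I_N}) :
  RO_feasible con v deck ->
  forall sigma : {perm 'I_N}, sigma != 1%g ->
    Tsig con v sigma (rcons deck [set: 'I_N]) <> Tstar con v (rcons deck [set: 'I_N]).
Proof.
move=> [_ distinguishes] sigma sigma_nontrivial agree_ext.
exact: (distinguishes sigma sigma_nontrivial
          (tallies_agree_without_full_ballot agree_ext)).
Qed.
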